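(* Let $q\equiv 1\pmod 6$ be a prime power, let $\rho$ be a primitive element of $\mathbb F_q$, and let $\pi:(\mathbb Z_2^2)^*\to\mathbb Z_3$ be a bijection. Suppose $c=c^3_q(1,2)$ is odd and $l=(c+1)/2$. Then $\Gamma=\operatorname{Cay}(G_{l,2,q},S(\pi))$ is not strongly regular.
   Context: For an additive group $A$, $A^*=A\setminus\{0\}$. $G_{l,2,q}=\mathbb Z_l\oplus\mathbb Z_2^2\oplus\mathbb F_q$. $S_0=\{(g,0): g\in(\mathbb Z_l\oplus\mathbb Z_2^2)^*\}$; for $z\in(\mathbb Z_2^2)^*$, $S_{z,\pi}=\{(0,z,\rho^j): j\in\mathbb Z,\ j\equiv\pi(z)\pmod 3\}$; $S(\pi)=S_0\cup\bigcup_z S_{z,\pi}$; $\operatorname{Cay}(G_{l,2,q},S(\pi))$ has vertex set $G_{l,2,q}$ with $x\sim y$ iff $y-x\in S(\pi)$. Write $q=6r+1$; $C^3_q(i)=\{\rho^{3j+i}:0\le j\le 2r-1\}$ for $i\in\mathbb Z_3$, $c^3_q(a,b)=|(C^3_q(a)+1)\cap C^3_q(b)|$. A graph is strongly regular if it is non-empty, regular, every two adjacent vertices have a constant number $\lambda$ of common neighbours, and every two distinct non-adjacent vertices have a constant number $\mu$ of common neighbours. *)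

From HB Require Import structures.
From mathcomp Require Import all_boot all_order all_algebra.
From mathcomp Require Import boolp.
Set Implicit Arguments. Unset Strict Implicit. Unset Printing Implicit Defensive.
Import Order.TTheory GRing.Theory Num.Theory.
Local Open Scope ring_scope.

(* Z_l for l >= 1, represented as 'I_(l.-1).+1 (the integers mod l, with its
   canonical additive group structure); for l >= 1 this has exactly l elements.
   (MathComp's 'Z_l is not used because 'Z_1 denotes Z/2.) *)
Notation Zl l := 'I_(l.-1).+1.

Notation Z22 := ('Z_2 * 'Z_2)%type.

Notation Gl2q l F := ((Zl l * Z22) * (F : finFieldType))%type.

Definition S0 (l : nat) (F : finFieldType) : {set Gl2q l F} :=
  [set x : Gl2q l F | (x.2 == 0) && (x.1 != 0)].

Definition Szpi (l : nat) (F : finFieldType) (rho : F) (pi : Z22 -> 'Z_3)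
    (z : Z22) : {set Gl2q l F} :=
  [set x : Gl2q l F | [&& x.1.1 == 0, x.1.2 == z &
     `[< exists j : int, ((j %% 3)%Z = (pi z : nat)%:Z) /\ x.2 = rho ^ j >] ]].

Definition Spi (l : nat) (F : finFieldType) (rho : F) (pi : Z22 -> 'Z_3)
    : {set Gl2q l F} :=
  S0 l F :|: \bigcup_(z in [set z : Z22 | z != 0]) Szpi l rho pi z.

Definition cay_adj (G : zmodType) (S : {pred G}) : rel G :=
  fun x y => (y - x) \in S.

Definition strongly_regular (V : finType) (adj : rel V) : Prop :=
  [/\ exists x y, adj x y,
      exists k : nat, forall x, #|[set y | adj x y]| = k,
      exists lam : nat, forall x y, adj x y ->
          #|[set w | adj x w && adj y w]| = lam &
      exists mu : nat, forall x y, x != y -> ~~ adj x y ->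
          #|[set w | adj x w && adj y w]| = mu].

(* Cyclotomic classes of order 3: q = 6r+1, C^3_q(i) = {rho^(3j+i) : 0 <= j <= 2r-1} *)
Definition cyc3 (F : finFieldType) (rho : F) (i : nat) : {set F} :=
  [set rho ^+ (3 * j + i) | j : 'I_(2 * ((#|F| - 1) %/ 6))].

Definition cyc3num (F : finFieldType) (rho : F) (a b : nat) : nat :=
  #|[set y : F | (y - 1 \in cyc3 rho a) && (y \in cyc3 rho b)]|.

Definition Gamma (l : nat) (F : finFieldType) (rho : F) (pi : Z22 -> 'Z_3)
    : rel (Gl2q l F) :=
  @cay_adj (Gl2q l F) (fun x => x \in Spi l rho pi).

From HB Require Import structures.
From mathcomp Require Import all_boot all_order all_algebra zify boolp.

Set Implicit Arguments.
Unset Strict Implicit.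
Unset Printing Implicit Defensive.

Import Order.TTheory GRing.Theory Num.Theory.
Local Open Scope ring_scope.

(* Since S(pi) = -S(pi), the map w |-> d - w is an involution on the common
   neighbours of 0 and d in Cay(G, S(pi)), so their number is congruent mod 2
   to the number of w in S(pi) with 2w = d.  For d = (0, b, 1) with b != 0
   there is no such w (2w has trivial Z_2^2-part), while for d = (0, 0, 2) the
   only one is (0, z0, 1) with pi(z0) = 0.  Both vertices are non-adjacent to
   0, so mu would be both even and odd.  In particular neither the parity of
   c^3_q(1,2) nor the value of l is needed. *)

Lemma card_involution_fixfree_even (T : finType) (f : T -> T) (A : {set T}) :
  involutive f -> {homo f : x / x \in A} -> {in A, forall x, f x != x} ->
  ~~ odd #|A|.
Proof.
move=> finv; have [n] := ubnP #|A|; elim: n A => // n IH A ltA fA fx_neq.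
have [->|[x xA]] := set_0Vmem A; first by rewrite cards0.
set B := A :\ x :\ f x.
have fxA : f x \in A :\ x by rewrite !inE fx_neq // fA.
have cardA : #|A| = #|B|.+2.
  by rewrite (cardsD1 x A) xA (cardsD1 (f x) (A :\ x)) fxA.
rewrite cardA /= negbK; apply: IH.
- by move: ltA; rewrite cardA; lia.
- move=> y; rewrite !inE => /and3P[yfx yx yA]; rewrite fA // andbT.
  apply/andP; split; first by apply: contra yx => /eqP/(can_inj finv)->.
  by apply: contra yfx => /eqP<-; rewrite finv.
- by move=> y; rewrite !inE => /and3P[_ _ /fx_neq].
Qed.

Lemma odd_card_involution (T : finType) (f : T -> T) (A : {set T}) :
  involutive f -> {homo f : x / x \in A} ->
  odd #|A| = odd #|[set x in A | f x == x]|.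
Proof.
move=> finv fA; rewrite -(cardsID [set x | f x == x] A) oddD.
have -> : A :&: [set x | f x == x] = [set x in A | f x == x].
  by apply/setP => x; rewrite !inE.
rewrite (negbTE (card_involution_fixfree_even (A := A :\: _) finv _ _)).
- by rewrite addbF.
- move=> x; rewrite !inE => /andP[fx_neq xA].
  by rewrite fA // finv eq_sym fx_neq.
- by move=> x; rewrite !inE => /andP[].
Qed.

Section CayleyCommonNeighbours.

Variables (G : finZmodType) (S : {set G}).
Hypothesis S_oppr : {homo -%R : s / s \in S}.
Local Notation adj := (cay_adj (fun x => x \in S)).

Lemma odd_card_cay_common_nbrs (d : G) :
  odd #|[set w | adj 0 w && adj d w]| = odd #|[set w in S | d - w == w]|.
Proof.
have dK : involutive (fun w => d - w) by move=> w; rewrite opprB addrC subrK.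
rewrite (odd_card_involution dK); last first.
  move=> w; rewrite !inE /cay_adj !subr0 => /andP[wS wdS].
  by rewrite addrAC subrr add0r -opprB !S_oppr.
congr (odd _); apply: eq_card => w; rewrite !inE /cay_adj subr0.
case: eqP => [dw | _]; rewrite ?andbF // !andbT.
apply/andP/idP => [[] // | wS]; split => //.
by rewrite -[w - d]opprB dw S_oppr.
Qed.

End CayleyCommonNeighbours.

Lemma prim_root_expr_half (R : idomainType) (n : nat) (z : R) :
  n.-primitive_root z -> ~~ odd n -> z ^+ (n %/ 2) = -1.
Proof.
move=> z_prim n_even; have n_gt0 := prim_order_gt0 z_prim.
have /eqP : (z ^+ (n %/ 2)) ^+ 2 = 1.
  by rewrite -exprM divnK ?prim_expr_order // dvdn2.
rewrite sqrf_eq1 -(prim_order_dvd z_prim) gtnNdvd //= => [/eqP // | |].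
- by move: n_even n_gt0; rewrite divn_gt0 // -dvdn2; lia.
- by rewrite ltn_Pdiv.
Qed.

Lemma prim_root_exprz_eq1 (R : unitRingType) (n : nat) (z : R) (j : int) :
  n.-primitive_root z -> (z ^ j == 1) = (n%:Z %| j)%Z.
Proof.
move=> z_prim; rewrite dvdzE; case: j => m.
  by rewrite -exprnP -(prim_order_dvd z_prim).
by rewrite NegzE -exprnN invr_eq1 -(prim_order_dvd z_prim) abszN.
Qed.

Lemma oppr_Z2 (u : 'Z_2) : - u = u.
Proof. exact: (oppr_pchar2 (pchar_Fp (p := 2) isT)). Qed.

Lemma oppr_Z22 (u : Z22) : - u = u.
Proof. by case: u => a b; rewrite (_ : - (a, b) = (- a, - b)) // !oppr_Z2. Qed.

Section GammaCommonNeighbours.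

Context {F : finFieldType} {rho : F} { pi : Z22 -> 'Z_3 } {l : nat}.
Hypothesis q_mod6 : (#|F| %% 6 = 1)%N.
Hypothesis rho_prim : (#|F| - 1).-primitive_root rho.

(* MathComp does not join the finType and zmodType structures of a product. *)
HB.instance Definition _ := GRing.Zmodule.on (Gl2q l F).

Local Notation n := (#|F| - 1)%N.
Local Notation S := (Spi l rho pi).

Let six_dvd_n : (6 %| n)%N. Proof. lia. Qed.

Lemma exprz_rho_eq1_mod3 (j : int) : rho ^ j = 1 -> (j %% 3)%Z = 0.
Proof.
move/eqP; rewrite (prim_root_exprz_eq1 _ rho_prim) => n_dvd_j.
apply/dvdz_mod0P; apply: dvdz_trans n_dvd_j.
by rewrite dvdzE (dvdn_trans _ six_dvd_n).
Qed.

Lemma two_neq0 : (2 : F) != 0.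
Proof. exact: prim_root_dvd_eq0 rho_prim _ (dvdn_trans _ six_dvd_n). Qed.

Lemma Spi_oppr (s : Gl2q l F) : s \in S -> - s \in S.
Proof.
have rho_half : rho ^+ (n %/ 2) = -1.
  apply: prim_root_expr_half rho_prim _.
  by rewrite -dvdn2 (dvdn_trans _ six_dvd_n).
have rho_neq0 : rho != 0.
  by rewrite (prim_root_eq0 rho_prim) -lt0n (prim_order_gt0 rho_prim).
rewrite !inE => /orP[/andP[s2 s1] | /bigcupP[z z_neq0]].
  by rewrite /= (eqP s2) oppr0 eqxx oppr_eq0 s1.
rewrite !inE => /and3P[/eqP s11 /eqP s12 /asboolP[j [j_mod e]]].
apply/orP; right; apply/bigcupP; exists z => //; rewrite !inE /= s11 oppr0 eqxx.
rewrite oppr_Z22 s12 eqxx; apply/asboolP; exists (j + (n %/ 2)%N); split.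
  by move: j_mod six_dvd_n; lia.
by rewrite expfzDr // -exprnP rho_half mulrN1 e.
Qed.

Lemma mem_Spi_snd_neq0 (w : Gl2q l F) : w \in S -> w.2 != 0 ->
  [/\ w.1.1 = 0, w.1.2 != 0 &
      exists j : int, (j %% 3)%Z = (pi w.1.2 : nat)%:Z /\ w.2 = rho ^ j].
Proof.
rewrite /Spi in_setU => /orP[|/bigcupP[z]].
  by rewrite inE => /andP[/eqP-> _]; rewrite eqxx.
by rewrite !inE => z_neq0 /and3P[/eqP w11 /eqP-> /asboolP j_exp] _.
Qed.

Lemma mem_Spi_snd1 (w : Gl2q l F) : w \in S -> w.2 = 1 ->
  w.1.1 = 0 /\ pi w.1.2 = 0.
Proof.
move=> wS w2; have [|w11 _ [j [j_mod w2j]]] := mem_Spi_snd_neq0 wS.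
  by rewrite w2 oner_eq0.
split=> //; apply/val_inj.
by have := exprz_rho_eq1_mod3 (etrans (esym w2j) w2); rewrite j_mod => -[].
Qed.

Lemma sub_fix_Z22_eq0 (d w : Gl2q l F) : d - w = w -> d.1.2 = 0.
Proof.
move/(congr1 (fun u => u.1.2)) => /=.
by rewrite oppr_Z22 -[RHS]add0r => /addIr.
Qed.

Lemma Spi_fix_eq0 (d : Gl2q l F) :
  d.1.2 != 0 -> [set w in S | d - w == w] = set0.
Proof.
move=> d12_neq0; apply/setP => w; rewrite !inE.
case: (d - w =P w) => [w_fix | _]; last by rewrite andbF.
by rewrite (sub_fix_Z22_eq0 w_fix) eqxx in d12_neq0.
Qed.

Lemma Spi_fix_two (z0 : Z22) : z0 != 0 -> pi z0 = 0 ->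
  {in [set z : Z22 | z != 0] &, injective pi} ->
  [set w in S | ((0, 0), 2) - w == w] = [set ((0, z0), 1)].
Proof.
move=> z0_neq0 piz0 pi_inj; apply/setP => w; rewrite inE in_set1.
apply/andP/eqP => [[wS /eqP w_fix] | ->].
  have w2 : w.2 = 1.
    apply: (mulIf two_neq0); have /= w2_fix := congr1 snd w_fix.
    by rewrite mul1r mulr_natr mulr2n -{1}w2_fix subrK.
  have [w11 piw12] := mem_Spi_snd1 wS w2.
  have [|_ w12_neq0 _] := mem_Spi_snd_neq0 wS; first by rewrite w2 oner_eq0.
  have w12 : w.1.2 = z0 by apply: pi_inj; rewrite ?inE ?piw12.
  by rewrite [w]surjective_pairing [w.1]surjective_pairing w11 w12 w2.
split.
  rewrite /Spi in_setU; apply/orP; right; apply/bigcupP; exists z0.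
    by rewrite inE.
  by rewrite !inE /= !eqxx; apply/asboolP; exists 0; rewrite piz0 expr0z.
apply/eqP; rewrite (_ : (0, 0, 2) - (0, z0, 1) = (0 - 0, 0 - z0, 2 - 1)) //.
by rewrite subrr sub0r oppr_Z22 -[2]/(1 + 1 : F) addrK.
Qed.

Lemma Spi_notin_one (b : Z22) : pi b != 0 -> ((0, b), 1) \notin S.
Proof. by apply: contra => /mem_Spi_snd1 /(_ erefl) [_ ->]. Qed.

Lemma Spi_notin_two : ((0, 0), 2) \notin S.
Proof. by apply/negP => /mem_Spi_snd_neq0 /(_ two_neq0) [_ /negP]. Qed.

Lemma odd_card_Gamma_common_nbrs (d : Gl2q l F) :
  odd #|[set w | @Gamma l F rho pi 0 w && @Gamma l F rho pi d w]| =
  odd #|[set w in S | d - w == w]|.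
Proof. exact: odd_card_cay_common_nbrs Spi_oppr d. Qed.

End GammaCommonNeighbours.

Theorem corollary4p4 (F : finFieldType) (rho : F) (pi : Z22 -> 'Z_3) (l : nat) :
  (#|F| %% 6 = 1)%N ->
  (#|F| - 1).-primitive_root rho ->
  {in [set z : Z22 | z != 0] &, injective pi} ->
  pi @: [set z : Z22 | z != 0] = [set: 'Z_3] ->
  odd (cyc3num rho 1 2) ->
  l = ((cyc3num rho 1 2 + 1) %/ 2)%N ->
  ~ strongly_regular (@Gamma l F rho pi).
Proof.
move=> q_mod6 rho_prim pi_inj pi_onto _ _ [_ _ _ [mu mu_const]].
have pi_preim (k : 'Z_3) : exists2 z : Z22, z != 0 & pi z = k.
  have /imsetP[z] : k \in pi @: [set z : Z22 | z != 0] by rewrite pi_onto inE.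
  by rewrite inE => z_neq0 ->; exists z.
have [b b_neq0 pib] := pi_preim 1; have [z0 z0_neq0 piz0] := pi_preim 0.
have odd_mu (d : Gl2q l F) : d.2 != 0 -> d \notin Spi l rho pi ->
    odd mu = odd #|[set w in Spi l rho pi | d - w == w]|.
  move=> d2_neq0 dS; rewrite -(odd_card_Gamma_common_nbrs q_mod6 rho_prim).
  rewrite mu_const //; last by rewrite /Gamma /cay_adj subr0.
  by apply: contraNneq d2_neq0 => <-.
have := odd_mu ((0, 0), 2) (two_neq0 q_mod6 rho_prim)
  (Spi_notin_two q_mod6 rho_prim).
rewrite (Spi_fix_two q_mod6 rho_prim z0_neq0 piz0 pi_inj) cards1.
rewrite (odd_mu ((0, b), 1)) ?oner_neq0 ?Spi_fix_eq0 ?cards0 //.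
by rewrite (Spi_notin_one q_mod6 rho_prim) // pib oner_neq0.
Qed.
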